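(* Let $f:\mathrm{GF}(p^m)\to\mathrm{GF}(p^m)$, $f(x)=x^d$ with $d<p^m$, let $0<k\le m(p-1)$ with $k\le S_p(d)$, and let $h_1,\ldots,h_k\in\mathrm{GF}(p^m)\setminus\{0\}$. Write $d$ in base $p$ as $d=d_ud_{u-1}\ldots d_1d_0$. Let $i$ be the largest integer in $\{-1,0,\ldots,u\}$ with $d_0+d_1+\cdots+d_i\le k$ (empty sum $=0$ for $i=-1$), put $d'_{i+1}=d_{i+1}-(k-(d_0+\cdots+d_i))$ (with $d_{u+1}=0$), and let $d'$ be the integer with base-$p$ digits $d_u\ldots d_{i+2}d'_{i+1}0\ldots0$ ($i+1$ trailing zeros). Then $\Delta^{(k)}_{h_1\mathbf{e}_1,\ldots,h_k\mathbf{e}_1}x^d$ is either zero or a polynomial of degree at most $d'$. In particular, for $p=2$ the binary representation of $d'$ is obtained from that of $d$ by replacing its $k$ least significant ones by zeros.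
   Context: $(\Delta_{h\mathbf{e}_1} f)(x) = f(x+h)-f(x)$ and $\Delta^{(k)}_{\mathbf{a}_1,\ldots,\mathbf{a}_k}=\Delta_{\mathbf{a}_1}\cdots\Delta_{\mathbf{a}_k}$. $S_p(a)$ denotes the sum of the digits of the nonnegative integer $a$ in base $p$. Polynomial functions over $\mathrm{GF}(p^m)$ are represented with degree at most $p^m-1$ in each variable. *)

From HB Require Import structures.
From mathcomp Require Import all_boot all_order all_algebra.
Set Implicit Arguments. Unset Strict Implicit. Unset Printing Implicit Defensive.
Import GRing.Theory.

Definition digit (p d j : nat) : nat := (d %/ p ^ j) %% p.

Definition topidx (p d : nat) : nat := trunc_log p d.

Definition Sp (p d : nat) : nat := \sum_(j < (topidx p d).+1) digit p d j.

(* d_0 + ... + d_{t-1}  (t = i+1; empty sum for t = 0, i.e. i = -1) *)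
Definition psum (p d t : nat) : nat := \sum_(j < t) digit p d j.

(* t = i+1 where i is the largest in {-1,..,u} with d_0+...+d_i <= k *)
Definition tidx (p d k : nat) : nat :=
  \max_(t < (topidx p d).+2 | psum p d t <= k) (nat_of_ord t).

(* d' : digits d_u ... d_{i+2} d'_{i+1} 0 ... 0, with
   d'_{i+1} = d_{i+1} - (k - (d_0+...+d_i)) *)
Definition dprime (p d k : nat) : nat :=
  let t := tidx p d k in
  (d %/ p ^ t.+1) * p ^ t.+1 + (digit p d t - (k - psum p d t)) * p ^ t.

Definition Delta (F : zmodType) (h : F) (f : F -> F) : F -> F :=
  fun x => (f (x + h) - f x)%R.

Definition DeltaK (F : zmodType) (hs : seq F) (f : F -> F) : F -> F :=
  foldr (@Delta F) f hs.

From mathcomp Require Import all_boot all_order all_algebra.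
From mathcomp Require Import zify.
Set Implicit Arguments. Unset Strict Implicit. Unset Printing Implicit Defensive.
Import GRing.Theory.

(* Split d into S_p(d) digit units, one of value p^j for each of the d_j units
   of its j-th digit, so that X^d is the product of the X^(p^j) over all units.
   In characteristic p, (X + h)^(p^j) = X^(p^j) + h^(p^j), hence a difference
   step turns the monomial X^(w B), w B the total value of a set B of units,
   into a combination of monomials X^(w J) with J a proper subset of B.  After
   k steps only X^(w B) with #|B| <= S_p(d) - k survive, and w B is largest
   when the k missing units are the k of smallest value: w B <= d'. *)

Definition weight (T : finType) (p : nat) (e : T -> nat) (A : {set T}) : nat :=
  \sum_(i in A) p ^ e i.

(* Truncated subtraction: only the x with p ^ e x < P contribute to the sum. *)
Lemma card_mul_leq_weight (T : finType) (p : nat) (e : T -> nat) P (C : {set T}) :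
  #|C| * P <= weight p e C + \sum_x (P - p ^ e x).
Proof.
have sumC : \sum_(x in C) (P - p ^ e x) <= \sum_x (P - p ^ e x).
  by rewrite [leqRHS](bigID (mem C)) leq_addr.
apply: leq_trans (leq_add (leqnn _) sumC); rewrite -big_split -sum_nat_const /=.
by apply: leq_sum => x _; rewrite -leq_subLR leqnn.
Qed.

Notation digit_unit p d := {j : 'I_(topidx p d).+2 & 'I_(digit p d j)}.

Definition unit_exp (p d : nat) (x : digit_unit p d) : nat := tag x.

Section DigitUnits.
Variables p d : nat.
Local Notation n := (topidx p d).+2.
Local Notation U := (digit_unit p d).
Local Notation w := (weight p (@unit_exp p d)).

Lemma divn_pexp_digit t :
  d %/ p ^ t * p ^ t = digit p d t * p ^ t + d %/ p ^ t.+1 * p ^ t.+1.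
Proof.
rewrite {1}(divn_eq (d %/ p ^ t) p) mulnDl -mulnA -expnS -divnMA -expnSr.
by rewrite addnC.
Qed.

Lemma digit_expansion t : d = \sum_(j < t) digit p d j * p ^ j + d %/ p ^ t * p ^ t.
Proof.
elim: t => [|t IH]; first by rewrite big_ord0 expn0 divn1 muln1.
by rewrite big_ord_recr -addnA -divn_pexp_digit.
Qed.

Lemma sum_digit_units (g : nat -> nat) :
  \sum_(x : U) g (unit_exp x) = \sum_(j < n) digit p d j * g j.
Proof.
pose G (j : 'I_n) (_ : 'I_(digit p d j)) := g j.
rewrite -(sig_big_dep xpredT (fun _ => xpredT) G) /=.
by apply: eq_bigr => j _; rewrite sum_nat_const card_ord.
Qed.

Lemma Sp_le_card_units : Sp p d <= #|{: U}|.
Proof.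
rewrite -sum1_card (sum_digit_units (fun _ => 1)) big_ord_recr /Sp.
by apply: leq_trans (leq_addr _ _); apply: leq_sum => j _; rewrite muln1.
Qed.

Lemma psumS t : psum p d t.+1 = psum p d t + digit p d t.
Proof. by rewrite /psum big_ord_recr. Qed.

Lemma tidxP k : k <= Sp p d ->
  [/\ tidx p d k < n, psum p d (tidx p d k) <= k & k <= psum p d (tidx p d k).+1].
Proof.
move=> le_k_Sp; have psum0 : psum p d (@ord0 n.-1) <= k by rewrite /psum big_ord0.
rewrite /tidx (bigmax_eq_arg ord0) //; case: arg_maxnP => // t psum_t t_max.
split=> //; have [lt_tS_n | le_n_tS] := ltnP t.+1 n.
  rewrite leqNgt; apply/negP => /ltnW /(t_max (Ordinal lt_tS_n)).
  by rewrite /geq /= ltnn.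
have -> : nat_of_ord t = (topidx p d).+1 by apply/anti_leq; rewrite -ltnS ltn_ord.
by rewrite psumS; apply: leq_trans le_k_Sp (leq_addr _ _).
Qed.

Hypothesis p_gt1 : 1 < p.

Lemma weight_digit_units : w setT = d.
Proof.
have d_lt : d < p ^ n.
  apply: leq_trans (trunc_log_ltn d p_gt1) _.
  by rewrite leq_pexp2l ?(ltnW p_gt1) /topidx.
rewrite /weight (eq_bigl xpredT) => [|x]; last by rewrite inE.
by rewrite (sum_digit_units (expn p)) [RHS](digit_expansion n) divn_small // mul0n addn0.
Qed.

Lemma sum_subn_pexp t : t <= n ->
  \sum_(x : U) (p ^ t - p ^ unit_exp x) + \sum_(j < t) digit p d j * p ^ j =
  psum p d t * p ^ t.
Proof.
move=> le_t_n; have p_gt0 : 0 < p by apply: ltnW.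
rewrite (sum_digit_units (fun j => p ^ t - p ^ j)) (bigID (fun j : 'I_n => j < t)).
rewrite [X in _ + X + _]big1 ?addn0 => [|j]; last first.
  rewrite -leqNgt => le_t_j.
  suff -> : p ^ t - p ^ j = 0 by rewrite muln0.
  by apply/eqP; rewrite subn_eq0 leq_pexp2l.
rewrite (big_ord_narrow le_t_n) /psum big_distrl -big_split; apply: eq_bigr => j _ /=.
by rewrite -mulnDr subnK // leq_pexp2l // ltnW.
Qed.

Lemma dprime_add_low k : k <= Sp p d ->
  dprime p d k + (\sum_(j < tidx p d k) digit p d j * p ^ j
                  + (k - psum p d (tidx p d k)) * p ^ tidx p d k) = d.
Proof.
move=> le_k_Sp; have [_ le_psum_k] := tidxP le_k_Sp.
rewrite psumS [RHS](digit_expansion (tidx p d k)) divn_pexp_digit /dprime => le_k_psumS.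
have le_sub_digit : k - psum p d (tidx p d k) <= digit p d (tidx p d k).
  by rewrite leq_subLR.
have := leq_mul le_sub_digit (leqnn (p ^ tidx p d k)).
rewrite !mulnBl; lia.
Qed.

Lemma weight_le_dprime k (B : {set U}) :
  k <= Sp p d -> #|B| + k <= #|{: U}| -> w B <= dprime p d k.
Proof.
move=> le_k_Sp card_B; have [lt_t_n le_psum_k _] := tidxP le_k_Sp.
have le_k_C : k <= #|~: B| by rewrite -(leq_add2l #|B|) cardsC.
have low := dprime_add_low le_k_Sp; rewrite mulnBl in low.
have excess := sum_subn_pexp (ltnW lt_t_n).
have compl : k * p ^ tidx p d k <=
    w (~: B) + \sum_(x : U) (p ^ tidx p d k - p ^ unit_exp x).
  exact: leq_trans (leq_mul le_k_C (leqnn _)) (card_mul_leq_weight _ _ _ _).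
have weight_split : w B + w (~: B) = d.
  by rewrite -[X in _ = X]weight_digit_units /weight [RHS](big_setID B) setTI setTD.
have := leq_mul le_psum_k (leqnn (p ^ tidx p d k)).
lia.
Qed.

End DigitUnits.

Local Open Scope ring_scope.

Section PolyDifference.
Variable R : comNzRingType.

Definition deltap (h : R) (q : {poly R}) : {poly R} := q \Po ('X + h%:P) - q.

Lemma horner_deltap h q x : (deltap h q).[x] = q.[x + h] - q.[x].
Proof. by rewrite hornerD hornerN horner_comp hornerD hornerX hornerC. Qed.

Lemma DeltaK_horner (hs : seq R) (f : R -> R) (q : {poly R}) :
  (forall y, f y = q.[y]) -> forall x, DeltaK hs f x = (foldr deltap q hs).[x].
Proof.
move=> fq; elim: hs => [|h hs IH] x /=; first exact: fq.
by rewrite /Delta horner_deltap !IH.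
Qed.

End PolyDifference.

Section WeightSupport.
Variables (R : comNzRingType) (p : nat) (T : finType) (e : T -> nat).
Local Notation weight := (weight p e).

Definition wsupp (r : nat) (q : {poly R}) : Prop :=
  forall n, q`_n != 0 -> exists2 A : {set T}, (#|A| <= r)%N & n = weight A.

Lemma wsupp0 r : wsupp r 0.
Proof. by move=> n; rewrite coef0 eqxx. Qed.

Lemma wsuppD r q1 q2 : wsupp r q1 -> wsupp r q2 -> wsupp r (q1 + q2).
Proof.
move=> s1 s2 n; rewrite coefD.
by have [/s1 // | /negPn/eqP ->] := boolP (q1`_n != 0); rewrite add0r => /s2.
Qed.

Lemma wsupp_sum r (I : Type) (s : seq I) (P : pred I) (G : I -> {poly R}) :
  (forall i, P i -> wsupp r (G i)) -> wsupp r (\sum_(i <- s | P i) G i).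
Proof. by move=> sG; apply: big_ind => //; [exact: wsupp0 | exact: wsuppD]. Qed.

Lemma wsuppZ r c q : wsupp r q -> wsupp r (c *: q).
Proof.
by move=> sq n; rewrite coefZ => cq; apply: sq; apply: contraNneq cq => ->; rewrite mulr0.
Qed.

Lemma wsuppW r r' q : (r <= r')%N -> wsupp r q -> wsupp r' q.
Proof. by move=> le_r sq n /sq[A Ar ->]; exists A => //; apply: leq_trans le_r. Qed.

Lemma wsupp_scaleXw r (c : R) (A : {set T}) :
  (c != 0 -> (#|A| <= r)%N) -> wsupp r (c *: 'X^(weight A)).
Proof.
move=> cA n; rewrite coefZ coefXn; have [-> | _] := eqVneq n (weight A).
  by rewrite mulr1 => /cA; exists A.
by rewrite mulr0 eqxx.
Qed.

Lemma size_wsupp r q (D : nat) :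
  wsupp r q -> (forall A : {set T}, #|A| <= r -> weight A <= D)%N -> (size q <= D.+1)%N.
Proof.
move=> sq wD; apply/leq_sizeP => n ltDn; apply/eqP; apply: contraTT ltDn.
by case/sq=> A /wD leAD ->; rewrite -ltnNge ltnS.
Qed.

Hypothesis pcharRp : p \in [pchar R].

Lemma addX_pexp (h : R) j : ('X + h%:P) ^+ (p ^ j) = 'X^(p ^ j) + (h ^+ (p ^ j))%:P.
Proof.
rewrite exprDn_pchar ?polyC_exp //.
have pchar_poly_p : p \in [pchar {poly R}] by rewrite pchar_poly.
by rewrite (eq_pnat _ (pcharf_eq pchar_poly_p)) pnatX pnat_id ?(pcharf_prime pcharRp).
Qed.

Lemma prod_if_XnC (J : {set T}) (s : T -> nat) (c : T -> R) :
  \prod_i (if i \in J then 'X^(s i) else (c i)%:P) =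
  (\prod_(i in ~: J) c i) *: 'X^(\sum_(i in J) s i).
Proof.
rewrite (bigID (mem J)) /= -mul_polyC mulrC rmorph_prod -prodrXr; congr (_ * _).
  by apply: eq_big => [i | i /negPf ->]; rewrite ?inE.
by apply: eq_bigr => i ->.
Qed.

(* Expanding the product of the X^(p^e i) + h^(p^e i) over i in B gives one
   term c_J X^(weight (J :&: B)) for each J; J = [set: T] yields X^(weight B),
   and every other nonzero c_J forces J to miss some i in B. *)
Lemma wsupp_translateXw (h : R) (B : {set T}) :
  wsupp #|B|.-1 (('X + h%:P) ^+ weight B - 'X^(weight B)).
Proof.
pose s i := if i \in B then (p ^ e i)%N else 0%N.
pose c i := if i \in B then h ^+ (p ^ e i) else 0.
have sumsI (J : {set T}) : (\sum_(i in J) s i)%N = weight (J :&: B).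
  rewrite /weight [RHS](eq_bigl (fun i => (i \in J) && (i \in B))) => [|i].
    by rewrite big_mkcondr.
  by rewrite inE.
have -> : ('X + h%:P) ^+ weight B = \prod_i ('X^(s i) + (c i)%:P).
  rewrite /weight -prodrXr big_mkcond /=; apply: eq_bigr => i _.
  by rewrite /s /c; case: (i \in B); rewrite ?addX_pexp ?expr0 ?addr0.
rewrite bigA_distr (bigD1 setT) //= prod_if_XnC sumsI setTI setCT big_set0 scale1r.
rewrite addrAC subrr add0r; apply: wsupp_sum => J J_neT.
rewrite prod_if_XnC sumsI; apply: wsupp_scaleXw => cJ_neq0.
have [i _ iNJ] : exists2 i, i \in [set: T] & i \notin J.
  by apply/subsetPn; rewrite subTset.
have iB : i \in B.
  apply: contraTT cJ_neq0 => iNB; rewrite (bigD1 i) ?inE //= /c (negPf iNB).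
  by rewrite mul0r eqxx.
rewrite -subn1 leq_subRL ?card_gt0; last by apply/set0Pn; exists i.
rewrite (cardsD1 i B) iB add1n ltnS subset_leq_card //.
apply/subsetP => j; rewrite !inE => /andP[jJ ->]; rewrite andbT.
by apply: contraNneq iNJ => <-.
Qed.

Lemma wsupp_deltap r h q : wsupp r q -> wsupp r.-1 (deltap h q).
Proof.
move=> sq; rewrite /deltap comp_polyE.
rewrite [X in _ - X](_ : q = \sum_(n < size q) q`_n *: 'X^n) -?sumrB; last first.
  by rewrite -poly_def coefK.
apply: wsupp_sum => n _; rewrite -scalerBr.
have [/sq[A Ar ->] | /negPn/eqP ->] := boolP (q`_n != 0); last first.
  by rewrite scale0r; exact: wsupp0.
apply/wsuppZ; apply: (wsuppW _ (@wsupp_translateXw h A)).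
by rewrite -!subn1 leq_sub2r.
Qed.

Lemma wsupp_deltaps r (hs : seq R) q :
  wsupp r q -> wsupp (r - size hs) (foldr (@deltap R) q hs).
Proof.
move=> sq; elim: hs => [|h hs IH] /=; first by rewrite subn0.
by rewrite subnS; apply: wsupp_deltap.
Qed.

End WeightSupport.

(* Only the primality of p, the characteristic and k <= S_p(d) are used. *)
Theorem mainTheorem11 (F : finFieldType) (p m d k : nat)
  (hp : prime p) (hchar : p \in [pchar F]) (hcard : #|F| = (p ^ m)%N)
  (hd : (d < p ^ m)%N) (hk0 : (0 < k)%N) (hkm : (k <= m * (p - 1))%N)
  (hkS : (k <= Sp p d)%N)
  (h : 'I_k -> F) (hnz : forall j, h j != 0) :
  exists q : {poly F},
    (size q <= (dprime p d k).+1)%N /\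
    forall x : F,
      DeltaK [seq h j | j <- enum 'I_k] (fun y : F => y ^+ d) x = q.[x].
Proof.
set hs := [seq h j | j <- enum 'I_k].
have wsupp_Xd : wsupp p (@unit_exp p d) #|{: digit_unit p d}| ('X^d : {poly F}).
  rewrite -[d in 'X^d](weight_digit_units d (prime_gt1 hp)) -['X^_]scale1r.
  by apply: wsupp_scaleXw; rewrite cardsT.
exists (foldr (@deltap F) 'X^d hs); split; last first.
  by apply: DeltaK_horner => y; rewrite hornerXn.
apply: (size_wsupp (wsupp_deltaps hchar (hs := hs) wsupp_Xd)) => B.
rewrite size_map size_enum_ord leq_subRL => [card_B|]; last first.
  exact: leq_trans hkS (Sp_le_card_units p d).
by apply: (weight_le_dprime (prime_gt1 hp) hkS); rewrite addnC.
Qed.
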